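(* Let $X$ be the Banach space whose underlying set is $\ell_2$ (real square-summable sequences) with the norm $\|x\|=\max\{\|x\|_\infty,\|x\|_2/\sqrt{2}\}$, and let $\theta$ be its origin and $B(\theta,r)$ the closed ball of radius $r$ about $\theta$ in this norm. Let $$A=B(\theta,1)\cap\{x=\{x_n\}_{n\ge1}\in X : x_1=1,\ x_i\ge 0\text{ for all } i\ge1\},$$ $$B=B(\theta,2)\cap\{x=\{x_n\}_{n\ge1}\in X : x_1=2,\ x_i\ge 0\text{ for all } i\ge1\}.$$ If $T:A\cup B\to A\cup B$ is a cyclic relatively nonexpansive mapping, then there exists $(x,y)\in A\times B$ such that $\|x-Tx\|=\|y-Ty\|=\operatorname{dist}(A,B)$.
   Context: $\operatorname{dist}(A,B)=\inf\{\|x-y\|:x\in A,y\in B\}$. $T$ is relatively nonexpansive if $\|Tx-Ty\|\le\|x-y\|$ for all $x\in A$, $y\in B$, and cyclic if $T(A)\subseteq B$ and $T(B)\subseteq A$. *)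

From Stdlib Require Import Reals.
From Coquelicot Require Import Coquelicot.
Open Scope R_scope.

(* Real sequences; index 0 plays the role of the paper's x_1. *)
Definition seqR := nat -> R.

Definition in_l2 (x : seqR) : Prop := ex_series (fun n => (x n) ^ 2).

Definition norm_inf (x : seqR) : R := real (Sup_seq (fun n => Rabs (x n))).

Definition norm_2 (x : seqR) : R := sqrt (Series (fun n => (x n) ^ 2)).

Definition normX (x : seqR) : R := Rmax (norm_inf x) (norm_2 x / sqrt 2).

Definition vsub (x y : seqR) : seqR := fun n => x n - y n.

Definition origin : seqR := fun _ => 0.

Definition closed_ballX (r : R) (x : seqR) : Prop :=
  in_l2 x /\ normX (vsub x origin) <= r.

Definition setA (x : seqR) : Prop :=
  closed_ballX 1 x /\ x 0%nat = 1 /\ (forall i, 0 <= x i).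

Definition setB (x : seqR) : Prop :=
  closed_ballX 2 x /\ x 0%nat = 2 /\ (forall i, 0 <= x i).

Definition distX (A B : seqR -> Prop) : R :=
  real (Glb_Rbar (fun d => exists x y, A x /\ B y /\ d = normX (vsub x y))).

Definition cyclic_map (A B : seqR -> Prop) (T : seqR -> seqR) : Prop :=
  (forall x, A x -> B (T x)) /\ (forall y, B y -> A (T y)).

Definition rel_nonexpansive (A B : seqR -> Prop) (T : seqR -> seqR) : Prop :=
  forall x y, A x -> B y -> normX (vsub (T x) (T y)) <= normX (vsub x y).

(* The first coordinates of points of A and B differ by exactly 1, so every
   pair of points is at distance at least 1.  The norm of X only sees the
   moduli |x_n - y_n|, and |1 - 2| = |1 - 0|; hence y0 = 2 e_1 in B is at
   distance ||x|| <= 1 from every x in A.  For p = T y0 in A, nonexpansiveness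
   gives ||p - T p|| <= ||y0 - p|| <= 1, and then ||T p - T (T p)|| <=
   ||p - T p|| = 1 as well, so p and T p are best proximity points. *)

From Stdlib Require Import Reals Lra Lia.
From Coquelicot Require Import Coquelicot.
Open Scope R_scope.

Lemma is_series_zero : is_series (fun _ : nat => 0) 0.
Proof.
  assert (Hq : Rabs (1 / 2) < 1) by (rewrite Rabs_pos_eq; lra).
  pose proof (is_series_scal_l 0 _ _ (is_series_geom _ Hq)) as H.
  apply (is_series_ext _ _ _ (fun n => Rmult_0_l _)) in H.
  rewrite Rmult_0_l in H. exact H.
Qed.

Definition single0 (c : R) : seqR := fun n => match n with O => c | S _ => 0 end.

Lemma is_series_single0 (c : R) : is_series (single0 c) c.
Proof.
  apply (is_series_decr_n _ 1); [lia|].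
  rewrite sum_O. change (is_series (fun _ : nat => 0) (c + - c)).
  rewrite Rplus_opp_r. apply is_series_zero.
Qed.

Lemma l2_bounded (x : seqR) : in_l2 x -> exists M, forall n, Rabs (x n) <= M.
Proof.
  intros Hx. destruct (ex_series_Reals_0 _ Hx) as [l Hl].
  exists (1 + Rabs l). intros n.
  assert (Hsq : x n ^ 2 <= l).
  { apply Rle_trans with (sum_f_R0 (fun k => x k ^ 2) n).
    - destruct n as [|m]; simpl; [lra|].
      pose proof (cond_pos_sum (fun k => x k ^ 2) m (fun k => pow2_ge_0 _)). simpl in *. lra.
    - apply sum_incr; [exact Hl|]. intros k. apply pow2_ge_0. }
  rewrite <- pow2_abs in Hsq.
  pose proof (Rle_abs l). pose proof (Rabs_pos (x n)). nra.
Qed.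

Section SupNorm.

Variables (x : seqR) (M : R).
Hypothesis x_bounded : forall n, Rabs (x n) <= M.

Lemma Sup_seq_abs_le : Rbar_le (Sup_seq (fun n => Rabs (x n))) M.
Proof.
  apply Rbar_not_lt_le. intros Hlt.
  apply Sup_seq_minor_lt in Hlt as [n Hn]. simpl in Hn.
  specialize (x_bounded n). lra.
Qed.

Lemma Sup_seq_abs_finite : Sup_seq (fun n => Rabs (x n)) = Finite (norm_inf x).
Proof.
  unfold norm_inf.
  assert (Hub := Sup_seq_abs_le).
  assert (Hlb := Sup_seq_minor_le (fun n => Rabs (x n)) 0 0 (Rabs_pos _)).
  destruct (Sup_seq _); simpl in *; easy.
Qed.

Lemma Rabs_le_norm_inf (n : nat) : Rabs (x n) <= norm_inf x.
Proof.
  assert (H := Sup_seq_minor_le (fun k => Rabs (x k)) (Rabs (x n)) n (Rle_refl _)).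
  rewrite Sup_seq_abs_finite in H. exact H.
Qed.

Lemma norm_inf_le : norm_inf x <= M.
Proof.
  assert (H := Sup_seq_abs_le). rewrite Sup_seq_abs_finite in H. exact H.
Qed.

End SupNorm.

Lemma normX_abs_ext (x y : seqR) :
  (forall n, Rabs (x n) = Rabs (y n)) -> normX x = normX y.
Proof.
  intros Hxy. unfold normX, norm_inf, norm_2.
  rewrite (Sup_seq_ext _ (fun n => Finite (Rabs (y n)))) by (intros n; now rewrite Hxy).
  rewrite (Series_ext _ (fun n => y n ^ 2)) by (intros n; now rewrite <- pow2_abs, Hxy, pow2_abs).
  reflexivity.
Qed.

Lemma normX_vsub_sym (x y : seqR) : normX (vsub x y) = normX (vsub y x).
Proof. apply normX_abs_ext. intros n. apply Rabs_minus_sym. Qed.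

Lemma Rabs_vsub_le_normX (x y : seqR) (n : nat) :
  in_l2 x -> in_l2 y -> Rabs (x n - y n) <= normX (vsub x y).
Proof.
  intros Hx Hy.
  destruct (l2_bounded x Hx) as [Mx HMx]. destruct (l2_bounded y Hy) as [My HMy].
  apply Rle_trans with (norm_inf (vsub x y)); [|apply Rmax_l].
  assert (Hbound : forall k, Rabs (vsub x y k) <= Mx + My).
  { intros k. unfold vsub.
    eapply Rle_trans; [apply Rabs_triang|]. rewrite Rabs_Ropp.
    specialize (HMx k). specialize (HMy k). lra. }
  exact (Rabs_le_norm_inf _ _ Hbound n).
Qed.

Lemma normX_single0 (c : R) : normX (single0 c) = Rabs c.
Proof.
  assert (Hbound : forall n, Rabs (single0 c n) <= Rabs c).
  { intros [|n]; simpl; [lra|]. rewrite Rabs_R0. apply Rabs_pos. }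
  assert (Hinf : norm_inf (single0 c) = Rabs c).
  { apply Rle_antisym; [exact (norm_inf_le _ _ Hbound)|].
    exact (Rabs_le_norm_inf _ _ Hbound 0). }
  assert (H2 : norm_2 (single0 c) = Rabs c).
  { unfold norm_2.
    rewrite (Series_ext _ (single0 (c ^ 2))) by (intros [|n]; simpl; ring).
    rewrite (is_series_unique _ _ (is_series_single0 _)), <- pow2_abs.
    apply sqrt_pow2, Rabs_pos. }
  unfold normX. rewrite Hinf, H2. apply Rmax_left.
  assert (1 <= sqrt 2) by (rewrite <- sqrt_1; apply sqrt_le_1; lra).
  pose proof (Rabs_pos c).
  apply Rmult_le_reg_r with (sqrt 2); [lra|].
  unfold Rdiv. rewrite Rmult_assoc, Rinv_l by lra. nra.
Qed.

Lemma in_l2_single0 (c : R) : in_l2 (single0 c).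
Proof.
  exists (c ^ 2).
  apply (is_series_ext (single0 (c ^ 2))); [intros [|n]; simpl; ring|].
  apply is_series_single0.
Qed.

Lemma distX_eq (A B : seqR -> Prop) (d : R) (a b : seqR) :
  (forall x y, A x -> B y -> d <= normX (vsub x y)) ->
  A a -> B b -> normX (vsub a b) = d -> distX A B = d.
Proof.
  intros Hlow Ha Hb Hab. unfold distX.
  destruct (Glb_Rbar_correct
    (fun e => exists x y, A x /\ B y /\ e = normX (vsub x y))) as [Hlb Hglb].
  replace (Glb_Rbar _) with (Finite d); [reflexivity|].
  apply Rbar_le_antisym.
  - apply Hglb. intros e (x & y & Hx & Hy & ->). exact (Hlow x y Hx Hy).
  - apply Hlb. exists a, b. auto.
Qed.

Section BestProximity.

Variables (A B : seqR -> Prop) (T : seqR -> seqR) (d : R) (b0 : seqR).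
Hypotheses (T_cyclic : cyclic_map A B T) (T_nonexp : rel_nonexpansive A B T).
Hypothesis separated : forall x y, A x -> B y -> d <= normX (vsub x y).
Hypothesis b0_in_B : B b0.
Hypothesis b0_central : forall x, A x -> normX (vsub x b0) <= d.

Lemma best_proximity_pair :
  exists x y, A x /\ B y /\
    normX (vsub x (T x)) = d /\ normX (vsub y (T y)) = d.
Proof.
  destruct T_cyclic as [TAB TBA].
  set (p := T b0).
  assert (Hp : A p) by exact (TBA _ b0_in_B).
  assert (HTp : B (T p)) by exact (TAB _ Hp).
  assert (Hdp : normX (vsub p (T p)) = d).
  { apply Rle_antisym; [|exact (separated _ _ Hp HTp)].
    rewrite normX_vsub_sym.
    apply Rle_trans with (normX (vsub p b0)); [exact (T_nonexp _ _ Hp b0_in_B)|].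
    exact (b0_central _ Hp). }
  exists p, (T p). repeat split; auto.
  apply Rle_antisym.
  - rewrite <- Hdp. exact (T_nonexp _ _ Hp HTp).
  - rewrite normX_vsub_sym. exact (separated _ _ (TBA _ HTp) HTp).
Qed.

Lemma distX_best_proximity : distX A B = d.
Proof.
  destruct best_proximity_pair as (x & _ & Hx & _ & Hd & _).
  exact (distX_eq A B d x (T x) separated Hx (proj1 T_cyclic _ Hx) Hd).
Qed.

End BestProximity.

Lemma setA_setB_separated (x y : seqR) : setA x -> setB y -> 1 <= normX (vsub x y).
Proof.
  intros [[Hx _] [Hx0 _]] [[Hy _] [Hy0 _]].
  eapply Rle_trans; [|exact (Rabs_vsub_le_normX x y 0 Hx Hy)].
  rewrite Hx0, Hy0, Rabs_left by lra. lra.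
Qed.

Lemma single0_2_in_setB : setB (single0 2).
Proof.
  split; [split|split; [reflexivity|]].
  - apply in_l2_single0.
  - rewrite (normX_abs_ext _ (single0 2)) by (intros n; unfold vsub, origin; f_equal; ring).
    rewrite normX_single0, Rabs_pos_eq; lra.
  - intros [|n]; simpl; lra.
Qed.

Lemma single0_2_central (x : seqR) : setA x -> normX (vsub x (single0 2)) <= 1.
Proof.
  intros [[_ Hnorm] [Hx0 _]].
  rewrite (normX_abs_ext _ (vsub x origin)); [exact Hnorm|].
  intros [|n]; unfold vsub, origin; simpl.
  - rewrite Hx0, Rabs_left, Rabs_pos_eq; lra.
  - reflexivity.
Qed.

Theorem mainTheorem12 (T : seqR -> seqR) :
  cyclic_map setA setB T ->
  rel_nonexpansive setA setB T ->
  exists x y, setA x /\ setB y /\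
    normX (vsub x (T x)) = distX setA setB /\
    normX (vsub y (T y)) = distX setA setB.
Proof.
  intros Hcyc Hne.
  rewrite (distX_best_proximity _ _ T 1 (single0 2) Hcyc Hne
             setA_setB_separated single0_2_in_setB single0_2_central).
  exact (best_proximity_pair _ _ T 1 (single0 2) Hcyc Hne
           setA_setB_separated single0_2_in_setB single0_2_central).
Qed.
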